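(* Let $X$ be a compact metric space, $Y\subset[-1,1]$ compact, $H$ an RKHS of continuous functions on $X$ with closed unit ball $B_H$ and $\|f\|_\infty\le\|f\|_H$ for all $f\in H$, and $L:Y\times\mathbb R\to[0,\infty)$ continuous, convex in its second variable, satisfying for constants $\alpha\in[1,2]$, $c_L>0$: $\sup_{y\in Y}L(y,t)\le1+|t|^\alpha$ for all $t\in\mathbb R$ and $\sup_{y\in Y}|L(y,\cdot)|_{[-t,t]}|_1\le c_Lt^{\alpha-1}$ for all $t\ge0$. Let $P$ be a distribution on $X\times Y$ for which a minimizer $f^*_{L,P}$ of the $L$-risk exists, and suppose there are constants $v\ge0$, $c\ge1$, $\vartheta\in[0,1]$ and some $0<\lambda<1$ such that for all $f\in\lambda^{-1/2}B_H$ $$\mathbb E_P(L\circ f-L\circ f^*_{L,P})^2\le c(\|f\|_\infty+1)^v\big(\mathbb E_P(L\circ f-L\circ f^*_{L,P})\big)^\vartheta.$$ Then for all $g\in\mathcal G(\lambda)$ $$\mathbb E_Pg^2\le16c\Big(\Big(\frac{\mathbb E_Pg}{\lambda}\Big)^{1/2}+\Big(\frac{a(\lambda)}{\lambda}\Big)^{1/2}+1\Big)^v\Big((\mathbb E_Pg)^\vartheta+2a^\vartheta(\lambda)\Big).$$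
   Context: $|h|_1$ is the Lipschitz constant of $h$; $L\circ f$ denotes $(x,y)\mapsto L(y,f(x))$; $\mathcal R_{L,P}(f):=\mathbb E_PL\circ f$, $\mathcal R^*_{L,P}:=\inf\{\mathcal R_{L,P}(f):f\text{ measurable}\}$, attained by $f^*_{L,P}$. For $\lambda>0$, $f_{P,\lambda}:=\arg\min_{f\in H}(\lambda\|f\|_H^2+\mathcal R_{L,P}(f))$ and $a(\lambda):=\lambda\|f_{P,\lambda}\|_H^2+\mathcal R_{L,P}(f_{P,\lambda})-\mathcal R^*_{L,P}$; $a^\vartheta(\lambda)$ means $(a(\lambda))^\vartheta$, with $0^0:=1$. $C_\lambda(x,y,f):=\lambda\|f\|_H^2+L(y,f(x))$, $C_\lambda\circ f:=C_\lambda(\cdot,\cdot,f)$, and $\mathcal G(\lambda):=\{C_\lambda\circ f-C_\lambda\circ f_{P,\lambda}: f\in\lambda^{-1/2}B_H\}$. *)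

From HB Require Import structures.
From mathcomp Require Import all_boot all_order all_algebra.
From mathcomp Require Import all_classical all_reals all_analysis.
Set Implicit Arguments. Unset Strict Implicit. Unset Printing Implicit Defensive.
Import Order.TTheory GRing.Theory Num.Theory.
Import numFieldNormedType.Exports.
Local Open Scope classical_set_scope.
Local Open Scope ring_scope.

Section Defs.
Variables (R : realType) (X : pseudoPMetricType R).

Definition BX := g_sigma_algebraType (@open X).

Definition normH (ip : (X -> R) -> (X -> R) -> R) (f : X -> R) : R :=
  Num.sqrt (ip f f).

(* H is a reproducing kernel Hilbert space of functions on X with inner
   product ip (restricted to H): a real inner-product space of functions,
   complete for the induced norm, on which every point evaluation is a
   bounded (= continuous) linear functional. *)
Definition is_RKHS (H : set (X -> R)) (ip : (X -> R) -> (X -> R) -> R) : Prop :=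
  [/\ H (fun=> 0),
      (forall f g, H f -> H g -> H (fun x => f x + g x)),
      (forall (a : R) f, H f -> H (fun x => a * f x)),
      (forall f g, H f -> H g -> ip f g = ip g f)
    & (forall (a : R) f g h, H f -> H g -> H h ->
          ip (fun x => a * f x + g x) h = a * ip f h + ip g h)] /\
  [/\ (forall f, H f -> 0 <= ip f f),
      (forall f, H f -> ip f f = 0 -> f = fun=> 0),
      (forall u : nat -> X -> R, (forall n, H (u n)) ->
        (forall e : R, 0 < e -> exists N, forall m n, (N <= m)%N -> (N <= n)%N ->
             normH ip (fun x => u m x - u n x) < e) ->
        exists2 f, H f & forall e : R, 0 < e -> exists N, forall n, (N <= n)%N ->
             normH ip (fun x => u n x - f x) < e)
    & (forall x : X, exists C : R, forall f, H f -> `|f x| <= C * normH ip f)].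

Definition supnorm (f : X -> R) : R := sup [set `|f x| | x in [set: X]].

Section risk.
Variables (Y : set R) (L : R -> R -> R) (P : probability (BX * R)%type R).

(* E_P h for h on X x Y (P is concentrated on X x Y) *)
Definition Ex (h : BX * R -> R) : \bar R :=
  (\int[P]_(z in [set: BX] `*` Y) (h z)%:E)%E.

Definition Lcomp (f : X -> R) : BX * R -> R := fun z => L z.2 (f z.1).

Definition risk (f : X -> R) : \bar R := Ex (Lcomp f).

Definition bayes_risk : \bar R :=
  ereal_inf [set risk f | f in [set f : BX -> R | measurable_fun [set: BX] f]].

Variables (H : set (X -> R)) (ip : (X -> R) -> (X -> R) -> R) (lam : R).

Definition reg_risk (f : X -> R) : \bar R :=
  ((lam * normH ip f ^+ 2)%:E + risk f)%E.

Definition fPlam : X -> R :=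
  xget (fun=> 0) [set f | H f /\ forall g, H g -> (reg_risk f <= reg_risk g)%E].

Definition approx_err : \bar R := (reg_risk fPlam - bayes_risk)%E.

Definition Ccomp (f : X -> R) : BX * R -> R :=
  fun z => lam * normH ip f ^+ 2 + L z.2 (f z.1).

Definition Gset : set (BX * R -> R) :=
  [set g | exists2 f, H f /\ normH ip f <= (Num.sqrt lam)^-1 &
           g = (fun z => Ccomp f z - Ccomp fPlam z)].
End risk.
End Defs.

From HB Require Import structures.
From mathcomp Require Import all_boot all_order all_algebra.
From mathcomp Require Import all_classical all_reals all_analysis.
From mathcomp Require Import measurable_realfun lra ring.
Set Implicit Arguments. Unset Strict Implicit. Unset Printing Implicit Defensive.
Import Order.TTheory GRing.Theory Num.Theory.
Import numFieldNormedType.Exports.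
Local Open Scope classical_set_scope.
Local Open Scope ring_scope.

(* Write g = C_lam o f - C_lam o f0 with f0 = f_{P,lam}, let x = lam |f|_H^2 and
   x0 = lam |f0|_H^2, and let d, d0 be the excess risks of f and f0 over f*_{L,P}.
   Then E_P g = e := x - x0 + (d - d0) and a(lam) = x0 + d0, so x + d = e + a(lam).
   Pointwise g^2 <= 2 (x - x0)^2 + 4 (L o f - L o f* )^2 + 4 (L o f0 - L o f* )^2, and
   the variance bound controls the last two expectations by c (|f|_oo + 1)^v d^theta
   and c (|f0|_oo + 1)^v d0^theta.  Both x and x0 lie in [0, 1] (f0 does at least as
   well as 0 for the regularized risk, and R(0) <= 1), so (x - x0)^2 <= x + x0 <=
   x^theta + x0^theta.  Every quantity in sight is at most e + a(lam), and
   subadditivity of t |-> t^theta and t |-> t^(1/2) bounds its power by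
   e^theta + a^theta, resp. |f|_oo <= |f|_H = (x / lam)^(1/2) by
   (e / lam)^(1/2) + (a / lam)^(1/2); the factor c (...)^v >= 1 absorbs the rest.
   Measurability of L o f only needs continuity of L (a Caratheodory argument). *)

Section powR_bounds.
Variable R : realType.
Implicit Types a e p q y th : R.

Lemma ler_powR_self a th : 0 <= a <= 1 -> th <= 1 -> a <= powR a th.
Proof.
case/andP=> a0 a1 th1; have [->|a_neq0] := eqVneq a 0; first exact: powR_ge0.
by apply: ger1_powR => //; rewrite a1 andbT lt_def a_neq0.
Qed.

Lemma powR_subadd p q th : 0 <= th <= 1 -> 0 <= p -> 0 <= q ->
  powR (p + q) th <= powR p th + powR q th.
Proof.
move=> /andP[th0 th1] p0 q0.
have [s0|s_neq0] := eqVneq (p + q) 0.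
  have [-> ->] : p = 0 /\ q = 0 by split; lra.
  by rewrite addr0 lerDl powR_ge0.
have s_gt0 : 0 < p + q by rewrite lt_def s_neq0 addr_ge0.
set s := p + q in s_gt0 *; have s_ge0 := ltW s_gt0.
have share u : 0 <= u <= s -> powR u th = powR s th * powR (u / s) th.
  case/andP=> u0 _; rewrite -powRM ?divr_ge0 //.
  by rewrite mulrC divfK ?gt_eqF.
rewrite (share p) ?p0 ?lerDl // (share q) ?q0 ?lerDr //.
rewrite -mulrDr -[leLHS]mulr1 ler_wpM2l ?powR_ge0 //.
have share_le u : 0 <= u <= s -> u / s <= powR (u / s) th.
  case/andP=> u0 us; apply: ler_powR_self => //.
  by rewrite divr_ge0 //= ler_pdivrMr // mul1r.
have := share_le p; have := share_le q.
have : p / s + q / s = 1 by rewrite -mulrDl divff // gt_eqF.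
rewrite p0 q0 lerDl lerDr /=; lra.
Qed.

(* [e] may be negative, where [powR e th] is the junk value [1]. *)
Lemma powR_le_add y e a th : 0 <= th <= 1 -> 0 <= y -> 0 <= a -> y <= e + a ->
  powR y th <= powR e th + powR a th.
Proof.
move=> th01 y0 a0 yea; have th0 : 0 <= th by case/andP: th01.
have [e0|e_lt0] := leP 0 e.
  apply: le_trans _ (powR_subadd th01 e0 a0).
  by apply: ge0_ler_powR; rewrite ?nnegrE ?addr_ge0.
apply: le_trans (_ : powR a th <= _); last by rewrite lerDr powR_ge0.
by apply: ge0_ler_powR; rewrite ?nnegrE //; lra.
Qed.

End powR_bounds.

Section moment_inequality.
Variable R : realType.

Lemma sqr_sub_le_add (x x0 : R) : 0 <= x <= 1 -> 0 <= x0 <= 1 ->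
  (x - x0) ^+ 2 <= x + x0.
Proof.
move=> /andP[x_ge0 x_le1] /andP[x0_ge0 x0_le1].
have : x ^+ 2 <= x by rewrite expr2 ler_piMl.
have : x0 ^+ 2 <= x0 by rewrite expr2 ler_piMl.
have : 0 <= x * x0 by rewrite mulr_ge0.
rewrite !expr2; lra.
Qed.

Lemma sqr_add_sub_le (a b c : R) :
  (a + (b - c)) ^+ 2 <= 2 * a ^+ 2 + 4 * b ^+ 2 + 4 * c ^+ 2.
Proof.
have := sqr_ge0 (a - (b - c)); have := sqr_ge0 (b + c).
rewrite !expr2; nra.
Qed.

Lemma sqr_sub_le_powR (th x x0 d d0 e a : R) : 0 <= th <= 1 ->
  0 <= x <= 1 -> 0 <= x0 <= 1 -> 0 <= d -> 0 <= d0 ->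
  x + d = e + a -> x0 + d0 = a ->
  (x - x0) ^+ 2 <= powR e th + 2 * powR a th.
Proof.
move=> th01 x01 x001 d_ge0 d0_ge0 split_ea split_a.
have [[x_ge0 _] [x0_ge0 _]] := (andP x01, andP x001).
have [th0 th1] := andP th01; have a_ge0 : 0 <= a by lra.
have x_le : x <= powR e th + powR a th.
  apply: le_trans (ler_powR_self x01 th1) (powR_le_add th01 x_ge0 a_ge0 _).
  by rewrite -split_ea lerDl.
have x0_le : x0 <= powR a th.
  apply: le_trans (ler_powR_self x001 th1) _.
  by apply: ge0_ler_powR; rewrite ?nnegrE // -split_a lerDl.
by apply: le_trans (sqr_sub_le_add x01 x001) _; lra.
Qed.

Lemma norm_le_root_sum (lam n e a : R) : 0 < lam -> 0 <= n -> 0 <= a ->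
  lam * n ^+ 2 <= e + a -> n <= powR (e / lam) 2^-1 + powR (a / lam) 2^-1.
Proof.
move=> lam_gt0 n_ge0 a_ge0 nea; have lam_ge0 := ltW lam_gt0.
have -> : n = powR (lam * n ^+ 2 / lam) 2^-1.
  by rewrite mulrAC divff ?gt_eqF // mul1r powR12_sqrt ?sqr_ge0 // sqrtr_sqr ger0_norm.
apply: powR_le_add; rewrite ?divr_ge0 ?mulr_ge0 ?sqr_ge0 //.
- by rewrite invr_ge0 ler0n /= invf_le1 // ler1n.
- by rewrite -mulrDl ler_wpM2r // invr_ge0.
Qed.

Lemma ler_inv_sqrt (lam n : R) : 0 < lam -> 0 <= n ->
  (n <= (Num.sqrt lam)^-1) = (lam * n ^+ 2 <= 1).
Proof.
move=> lam_gt0 n_ge0; have sqrt_gt0 : 0 < Num.sqrt lam by rewrite sqrtr_gt0.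
have -> : lam * n ^+ 2 = (n * Num.sqrt lam) ^+ 2.
  by rewrite exprMn sqr_sqrtr ?ltW // mulrC.
by rewrite -(ler_pM2r sqrt_gt0) mulVf ?gt_eqF // expr_le1 // mulr_ge0 ?sqrtr_ge0.
Qed.

Lemma Gset_moment_ineq (lam c v th n n0 s s0 d d0 e a : R) :
  0 < lam -> 1 <= c -> 0 <= v -> 0 <= th <= 1 ->
  0 <= s <= n -> 0 <= s0 <= n0 -> lam * n ^+ 2 <= 1 -> lam * n0 ^+ 2 <= 1 ->
  0 <= d -> 0 <= d0 -> lam * n ^+ 2 + d = e + a -> lam * n0 ^+ 2 + d0 = a ->
  2 * (lam * n ^+ 2 - lam * n0 ^+ 2) ^+ 2
    + 4 * (c * powR (s + 1) v * powR d th)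
    + 4 * (c * powR (s0 + 1) v * powR d0 th)
  <= 16 * c * powR (powR (e / lam) 2^-1 + powR (a / lam) 2^-1 + 1) v *
       (powR e th + 2 * powR a th).
Proof.
move=> lam_gt0 c_ge1 v_ge0 th01 /andP[s_ge0 sn] /andP[s0_ge0 s0n0] x_le1 x0_le1
  d_ge0 d0_ge0 split_ea split_a.
have [th0 _] := andP th01; have c_ge0 := le_trans ler01 c_ge1.
have [n_ge0 n0_ge0] := (le_trans s_ge0 sn, le_trans s0_ge0 s0n0).
have x_ge0 : 0 <= lam * n ^+ 2 by rewrite mulr_ge0 ?sqr_ge0 ?ltW.
have x0_ge0 : 0 <= lam * n0 ^+ 2 by rewrite mulr_ge0 ?sqr_ge0 ?ltW.
have a_ge0 : 0 <= a by lra.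
set B := powR (e / lam) 2^-1 + powR (a / lam) 2^-1 + 1.
have s_B : s + 1 <= B.
  rewrite lerD2r (le_trans sn) // norm_le_root_sum //.
  by rewrite -split_ea lerDl.
have s0_B : s0 + 1 <= B.
  rewrite lerD2r (le_trans s0n0) // ler_wpDl ?powR_ge0 //.
  have := norm_le_root_sum (e := 0) lam_gt0 n0_ge0 a_ge0.
  rewrite mul0r powR0 ?invr_eq0 ?pnatr_eq0 // !add0r; apply.
  by rewrite -split_a lerDl.
set W := c * powR B v.
have le_W t : 0 <= t -> t + 1 <= B -> c * powR (t + 1) v <= W.
  move=> t0 tB; rewrite /W ler_wpM2l //.
  by apply: ge0_ler_powR => //; rewrite nnegrE; lra.
have W_ge1 : 1 <= W.
  have B_ge1 : 1 <= B by rewrite lerDr addr_ge0 ?powR_ge0.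
  have := le_W 0 (lexx 0); rewrite add0r powR1 mulr1 => /(_ B_ge1).
  exact: le_trans c_ge1.
have risk_term : c * powR (s + 1) v * powR d th <= W * (powR e th + powR a th).
  rewrite ler_pM ?mulr_ge0 ?powR_ge0 ?le_W // powR_le_add //.
  by rewrite -split_ea lerDr.
have risk0_term : c * powR (s0 + 1) v * powR d0 th <= W * powR a th.
  rewrite ler_pM ?mulr_ge0 ?powR_ge0 ?le_W //.
  by apply: ge0_ler_powR; rewrite ?nnegrE // -split_a lerDr.
have reg_term : (lam * n ^+ 2 - lam * n0 ^+ 2) ^+ 2 <= powR e th + 2 * powR a th.
  by apply: (sqr_sub_le_powR (d := d) (d0 := d0)); rewrite ?x_ge0 ?x0_ge0.
rewrite -/B -[16 * c * _]mulrA -/W.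
have := powR_ge0 a th; have := powR_ge0 e th.
have := ler_peMl (powR_ge0 a th) W_ge1; have := ler_peMl (powR_ge0 e th) W_ge1.
lra.
Qed.

End moment_inequality.

Lemma within_continuous_comp_continuous (S T U : topologicalType) (A : set T) (B : set S)
    (f : T -> U) (g : S -> T) :
  {within A, continuous f} -> continuous g -> g @` B `<=` A ->
  {within B, continuous (f \o g)}.
Proof.
move=> /subspace_continuousP cf cg gBA; apply/subspace_continuousP => x Bx.
have Agx : A (g x) by apply: gBA; exists x.
apply: cvg_trans (cf _ Agx) => W /=; rewrite !nbhs_simpl /= => /cg gW.
have {}gW : \forall z \near x, A (g z) -> W (f (g z)) := gW.
by apply: filterS gW => z Wz Bz; apply/Wz/gBA; exists z.
Qed.

Lemma measurable_fun_piecewise d (T : measurableType d) (R : realType) (D : set T)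
    (A : int -> set T) (f : T -> R) (g : int -> T -> R) :
  measurable D -> (forall k, measurable (D `&` A k)) -> D `<=` \bigcup_k A k ->
  (forall k z, D z -> A k z -> f z = g k z) -> (forall k, measurable_fun D (g k)) ->
  measurable_fun D f.
Proof.
move=> mD mA DA fg mg _ B mB.
have -> : D `&` f @^-1` B = \bigcup_k ((D `&` A k) `&` (D `&` g k @^-1` B)).
  apply/seteqP; split => z.
    by move=> [Dz Bz]; have [k _ Akz] := DA z Dz; exists k; rewrite //= -(fg k z).
  by move=> [k _ [[Dz Akz] [_ Bz]]]; split; rewrite //= (fg k z).
apply: countable_bigcupT_measurable => [|k]; first exact: countableP.
exact: measurableI (mA k) (mg k mD _ mB).
Qed.

Lemma floor_scale_dist (R : realType) (t m : R) : 0 < m ->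
  `|(Num.floor (t * m))%:~R / m - t| <= m^-1.
Proof.
move=> m_gt0; have /andP[lo hi] := floor_itv (t * m); rewrite intrD in hi.
have -> : (Num.floor (t * m))%:~R / m - t = ((Num.floor (t * m))%:~R - t * m) / m.
  by field; rewrite gt_eqF.
rewrite normrM [`|m^-1|]gtr0_norm ?invr_gt0 // ler_pdivrMr // mulVf ?gt_eqF // ler_norml.
apply/andP; split; lra.
Qed.

Lemma floor_scale_cvg (R : realType) (t : R) :
  (fun n : nat => (Num.floor (t * n.+1%:R))%:~R / n.+1%:R) @ \oo --> t.
Proof.
apply/cvgrPdist_le => e e_gt0; exists (Num.truncn e^-1) => // n /= le_en.
rewrite distrC (le_trans (floor_scale_dist _ _)) //.
rewrite invf_ple ?posrE //; apply: ltW.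
by move: le_en; rewrite truncn_le_nat.
Qed.

Lemma measurable_fun_caratheodory d (T : measurableType d) (R : realType)
    (D : set T) (F : R -> T -> R) (w : T -> R) :
  measurable D -> measurable_fun D w -> (forall t, measurable_fun D (F t)) ->
  (forall z, D z -> continuous (F ^~ z)) -> measurable_fun D (fun z => F (w z) z).
Proof.
move=> mD mw mF cF.
pose q (n : nat) z : R := (Num.floor (w z * n.+1%:R))%:~R / n.+1%:R.
apply: (measurable_fun_cvg (h := fun n z => F (q n z) z)) => [n|z Dz]; last first.
  exact: continuous_cvg _ (cF z Dz (w z)) (@floor_scale_cvg _ (w z)).
pose A k := (fun z => w z * n.+1%:R) @^-1` `[k%:~R, (k + 1)%:~R[.
apply: (measurable_fun_piecewise (A := A) (g := fun k => F (k%:~R / n.+1%:R))) => //.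
- by move=> k; apply: (measurable_funM mw (measurable_cst _)) => //; exact: measurable_itv.
- by move=> z _; exists (Num.floor (w z * n.+1%:R)) => //; rewrite /A /= in_itv /= floor_itv.
- by move=> k z _; rewrite /A /= in_itv /= => /floor_def; rewrite /q => ->.
Qed.

Section function_norms.
Variables (R : realType) (X : pseudoPMetricType R).

Lemma continuous_measurable_BX (f : X -> R) :
  continuous f -> measurable_fun [set: BX X] (f : BX X -> R).
Proof.
move=> cf; apply: (measurability _ (RGenOpens.measurableE R)).
move=> _ [_ [a [b ->]] <-]; rewrite setTI.
by apply: sub_sigma_algebra; exact: (continuousP _).1 cf _ (interval_open _ _).
Qed.

Lemma supnorm_ge (f : X -> R) : compact [set: X] -> continuous f ->
  forall x, `|f x| <= supnorm f.
Proof.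
move=> cX cf x; have cfX : compact (f @` [set: X]).
  by apply: continuous_compact => //; exact: continuous_subspaceT.
have [M [_ fM]] := compact_bounded cfX.
apply: ub_le_sup; last by exists x.
exists (M + 1) => _ [y _ <-]; apply: (fM (M + 1)); first by rewrite ltrDl.
by exists y.
Qed.

Lemma supnorm_ge0 (f : X -> R) : compact [set: X] -> continuous f -> 0 <= supnorm f.
Proof. by move=> cX cf; exact: le_trans (normr_ge0 _) (supnorm_ge cX cf point). Qed.

Lemma normH0 (H : set (X -> R)) ip : is_RKHS H ip -> normH ip (fun=> 0) = 0.
Proof.
move=> [[H0 _ _ _ ip_linear] _]; rewrite /normH.
have := ip_linear 1 _ _ _ H0 H0 H0; rewrite !mul1r addr0 => ip00.
suff -> : ip (fun=> 0) (fun=> 0) = 0 by rewrite sqrtr0.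
lra.
Qed.

End function_norms.

Section risk.
Variables (R : realType) (X : pseudoPMetricType R) (Y : set R) (L : R -> R -> R).
Variable P : probability (BX X * R)%type R.
Hypothesis mY : measurable Y.
Hypothesis P_XY : P ([set: BX X] `*` Y) = 1%E.
Hypothesis L_ge0 : forall y t, Y y -> 0 <= L y t.
Hypothesis L_cont : {within Y `*` [set: R], continuous (fun p : R * R => L p.1 p.2)}.

Local Notation XY := ([set: BX X] `*` Y).

Let mXY : measurable XY. Proof. exact: measurableX. Qed.

Lemma integral_cst_XY (r : R) : (\int[P]_(z in XY) r%:E = r%:E)%E.
Proof. by rewrite -[RHS]mule1 -P_XY -integral_cst. Qed.

Lemma measurable_Lcomp (w : BX X -> R) :
  measurable_fun [set: BX X] w -> measurable_fun XY (Lcomp L w).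
Proof.
move=> mw; apply: (measurable_fun_caratheodory (F := fun t z => L z.2 t)) => //.
- by apply: measurable_comp mw _ => //; exact: measurable_funS measurable_fst.
- move=> t; apply: (measurable_comp (F := Y) (f := fun y => L y t)) => //.
  + by move=> _ [z [_ Yz] <-].
  + apply: (subspace_continuous_measurable_fun mY).
    apply: (within_continuous_comp_continuous (g := fun y => (y, t)) L_cont).
      by move=> y; exact: (cvg_pair cvg_id (cvg_cst t)).
    by move=> _ [y Yy <-].
  + exact: measurable_funS measurable_snd.
- move=> [x y] [_ Yy]; apply/continuous_subspace_setT.
  apply: (within_continuous_comp_continuous (g := fun t => (y, t)) L_cont).
    by move=> t; exact: (cvg_pair (cvg_cst y) cvg_id).
  by move=> _ [t _ <-].
Qed.

Lemma risk_ge0 (w : X -> R) : (0 <= risk Y L P w)%E.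
Proof. by apply: integral_ge0 => -[x y] [_ Yy]; rewrite lee_fin L_ge0. Qed.

Lemma risk_fineK (f : X -> R) : P.-integrable XY (EFin \o Lcomp L f) ->
  risk Y L P f = (fine (risk Y L P f))%:E.
Proof. by move=> intf; rewrite fineK // (integrable_fin_num mXY intf). Qed.

Section bounded_loss.
Variables (w : BX X -> R) (M : R).
Hypothesis mw : measurable_fun [set: BX X] w.
Hypothesis LwM : forall x y, Y y -> L y (w x) <= M.

Lemma integrable_Lcomp : P.-integrable XY (EFin \o Lcomp L w).
Proof.
apply: (le_integrable mXY _ _ (finite_measure_integrable_cst P M mXY)).
  by apply/measurable_EFinP; exact: measurable_Lcomp.
move=> [x y] [_ Yy] /=; have Lw_ge0 := L_ge0 (w x) Yy.
by rewrite lee_fin !ger0_norm ?LwM // (le_trans Lw_ge0 (LwM x Yy)).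
Qed.

Lemma risk_le_bound : (risk Y L P w <= M%:E)%E.
Proof.
rewrite /risk /Ex -integral_cst_XY; apply: ge0_le_integral => //.
- by move=> [x y] [_ Yy]; rewrite lee_fin L_ge0.
- by apply/measurable_EFinP; exact: measurable_Lcomp.
- by move=> [x y] [_ Yy]; rewrite lee_fin LwM.
Qed.

End bounded_loss.

Variable alpha : R.
Hypothesis alpha_gt0 : 0 < alpha.
Hypothesis L_growth : forall t y, Y y -> L y t <= 1 + powR `|t| alpha.

Lemma L_le_growth (M t y : R) : Y y -> `|t| <= M -> L y t <= 1 + powR M alpha.
Proof.
move=> Yy tM; apply: le_trans (L_growth t Yy) _; rewrite lerD2l.
have M_ge0 := le_trans (normr_ge0 t) tM.
by apply: (ge0_ler_powR (ltW alpha_gt0)); rewrite ?nnegrE.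
Qed.

Lemma risk0_le1 : (risk Y L P (fun=> 0%R) <= 1)%E.
Proof.
apply: (risk_le_bound (w := fun=> 0)); first exact: measurable_cst.
by move=> x y Yy; rewrite (le_trans (L_growth _ Yy)) // normr0 powR0 ?gt_eqF ?addr0.
Qed.

Lemma bayes_risk_le1 : (bayes_risk Y L P <= 1)%E.
Proof.
apply: le_trans (ereal_inf_lbound _) risk0_le1.
by exists (fun=> 0) => //; exact: measurable_cst.
Qed.

Variable fstar : BX X -> R.
Hypothesis fstar_meas : measurable_fun [set: BX X] fstar.
Hypothesis fstar_min : risk Y L P fstar = bayes_risk Y L P.

Lemma integrable_Lcomp_fstar : P.-integrable XY (EFin \o Lcomp L fstar).
Proof.
apply/integrableP; split; first by apply/measurable_EFinP; exact: measurable_Lcomp.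
have -> : (\int[P]_(z in XY) `|(EFin \o Lcomp L fstar) z| = risk Y L P fstar)%E.
  by apply: eq_integral => -[x y]; rewrite inE => -[_ Yy]; rewrite /= ger0_norm ?L_ge0.
by rewrite fstar_min (le_lt_trans bayes_risk_le1) ?ltry.
Qed.

Definition excess_risk (f : X -> R) : R :=
  fine (risk Y L P f) - fine (risk Y L P fstar).

Lemma Ex_Lcomp_sub (f : X -> R) : P.-integrable XY (EFin \o Lcomp L f) ->
  Ex Y P (fun z => Lcomp L f z - Lcomp L fstar z) = (excess_risk f)%:E.
Proof.
move=> intf; rewrite /Ex.
under eq_integral do rewrite EFinB.
rewrite (integralB mXY intf integrable_Lcomp_fstar).
by rewrite /excess_risk EFinB -!risk_fineK ?integrable_Lcomp_fstar.
Qed.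

Variables (H : set (X -> R)) (ip : (X -> R) -> (X -> R) -> R) (lam : R).
Hypothesis X_compact : compact [set: X].
Hypothesis H_RKHS : is_RKHS H ip.
Hypothesis H_cont : forall f, H f -> continuous f.

Lemma integrable_Lcomp_H (f : X -> R) : H f -> P.-integrable XY (EFin \o Lcomp L f).
Proof.
move=> Hf; apply: (integrable_Lcomp (M := 1 + powR (supnorm f) alpha)).
  exact: continuous_measurable_BX (H_cont Hf).
by move=> x y Yy; apply: L_le_growth => //; exact: supnorm_ge (H_cont Hf) x.
Qed.

Lemma excess_risk_ge0 (f : X -> R) : H f -> 0 <= excess_risk f.
Proof.
move=> Hf; rewrite subr_ge0 -lee_fin -!risk_fineK ?integrable_Lcomp_fstar ?integrable_Lcomp_H //.
rewrite fstar_min; apply: ereal_inf_lbound; exists f => //.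
exact: continuous_measurable_BX (H_cont Hf).
Qed.

Local Notation f0 := (fPlam Y L P H ip lam).

Lemma fPlam_mem : H f0 /\ lam * normH ip f0 ^+ 2 <= 1.
Proof.
have [[H0 _ _ _ _] _] := H_RKHS.
rewrite /fPlam; case: xgetP => [g _ [Hg g_min]|_]; last first.
  by rewrite (normH0 H_RKHS) expr0n mulr0 ler01.
split => //; rewrite -lee_fin (le_trans (leeDl _ (risk_ge0 g))) //.
apply: le_trans (g_min _ H0) _.
by rewrite /reg_risk (normH0 H_RKHS) expr0n mulr0 add0e risk0_le1.
Qed.

Lemma approx_err_eq :
  approx_err Y L P H ip lam = (lam * normH ip f0 ^+ 2 + excess_risk f0)%:E.
Proof.
rewrite /approx_err /reg_risk -fstar_min.
rewrite (risk_fineK (integrable_Lcomp_H fPlam_mem.1)) (risk_fineK integrable_Lcomp_fstar).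
by rewrite -EFinN -!EFinD /excess_risk addrA.
Qed.

Lemma Ex_Ccomp_sub (f1 f2 : X -> R) : H f1 -> H f2 ->
  Ex Y P (fun z => Ccomp L ip lam f1 z - Ccomp L ip lam f2 z) =
  (lam * normH ip f1 ^+ 2 - lam * normH ip f2 ^+ 2
   + (excess_risk f1 - excess_risk f2))%:E.
Proof.
move=> Hf1 Hf2; set d := lam * normH ip f1 ^+ 2 - lam * normH ip f2 ^+ 2.
have int1 := integrable_Lcomp_H Hf1; have int2 := integrable_Lcomp_H Hf2.
rewrite /Ex (eq_integral (fun z => (cst d%:E z +
    ((EFin \o Lcomp L f1) z - (EFin \o Lcomp L f2) z)))%E); last first.
  by move=> z _; rewrite /= -EFinB -EFinD /Ccomp /Lcomp /d; congr EFin; ring.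
rewrite integralD //; last 2 first.
- exact: finite_measure_integrable_cst.
- exact: integrableB.
have r1 := risk_fineK int1; have r2 := risk_fineK int2; rewrite /risk /Ex in r1 r2.
rewrite integral_cst_XY integralB // r1 r2 -EFinN -!EFinD /excess_risk.
by congr EFin; ring.
Qed.

Lemma integral_XY_cst_add_sqr (k : R) (u1 u2 : BX X * R -> R) :
  0 <= k -> measurable_fun XY u1 -> measurable_fun XY u2 ->
  (\int[P]_(z in XY) (k%:E + 4%:E * (u1 z ^+ 2)%:E + 4%:E * (u2 z ^+ 2)%:E)
   = k%:E + 4%:E * \int[P]_(z in XY) (u1 z ^+ 2)%:E
     + 4%:E * \int[P]_(z in XY) (u2 z ^+ 2)%:E)%E.
Proof.
move=> k_ge0 mu1 mu2.
have mu1E : measurable_fun XY (fun z => (u1 z ^+ 2)%:E).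
  exact/measurable_EFinP/measurable_funX.
have mu2E : measurable_fun XY (fun z => (u2 z ^+ 2)%:E).
  exact/measurable_EFinP/measurable_funX.
have scale4_ge0 (r : R) : (0 <= 4%:E * (r ^+ 2)%:E)%E.
  by rewrite -EFinM lee_fin mulr_ge0 ?sqr_ge0.
rewrite ge0_integralD //; last 3 first.
- by move=> z _; apply: adde_ge0; rewrite // lee_fin.
- by apply: emeasurable_funD; [exact: measurable_cst | exact: measurable_funeM].
- exact: measurable_funeM.
rewrite ge0_integralD //; last exact: measurable_funeM.
by rewrite integral_cst_XY !ge0_integralZl_EFin // => z _; rewrite lee_fin sqr_ge0.
Qed.

Lemma Ex_sqr_Ccomp_sub_le (f1 f2 : BX X -> R) :
  measurable_fun [set: BX X] f1 -> measurable_fun [set: BX X] f2 ->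
  (Ex Y P (fun z => (Ccomp L ip lam f1 z - Ccomp L ip lam f2 z) ^+ 2)%R
   <= (2 * (lam * normH ip f1 ^+ 2 - lam * normH ip f2 ^+ 2) ^+ 2)%:E
      + 4%:E * Ex Y P (fun z => (Lcomp L f1 z - Lcomp L fstar z) ^+ 2)%R
      + 4%:E * Ex Y P (fun z => (Lcomp L f2 z - Lcomp L fstar z) ^+ 2)%R)%E.
Proof.
move=> mf1 mf2; set d := lam * _ - _.
set h1 := fun z => Lcomp L f1 z - Lcomp L fstar z.
set h2 := fun z => Lcomp L f2 z - Lcomp L fstar z.
have mLs := measurable_Lcomp fstar_meas.
have mh1 : measurable_fun XY h1 by apply: measurable_funB => //; exact: measurable_Lcomp.
have mh2 : measurable_fun XY h2 by apply: measurable_funB => //; exact: measurable_Lcomp.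
have Ccomp_sub z : Ccomp L ip lam f1 z - Ccomp L ip lam f2 z = d + (h1 z - h2 z).
  by rewrite /Ccomp /h1 /h2 /d /Lcomp /=; ring.
have k_ge0 : 0 <= 2 * d ^+ 2 by rewrite mulr_ge0 ?sqr_ge0.
rewrite /Ex -(integral_XY_cst_add_sqr k_ge0 mh1 mh2).
apply: ge0_le_integral => //.
- by move=> z _; rewrite lee_fin sqr_ge0.
- apply/measurable_EFinP/measurable_funX; under eq_fun do rewrite Ccomp_sub.
  by apply: measurable_funD => //; exact: measurable_funB.
- apply: emeasurable_funD; last exact/measurable_funeM/measurable_EFinP/measurable_funX.
  apply: emeasurable_funD; first exact: measurable_cst.
  exact/measurable_funeM/measurable_EFinP/measurable_funX.
- by move=> z _; rewrite -!EFinM -!EFinD lee_fin Ccomp_sub sqr_add_sub_le.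
Qed.

End risk.

Theorem lemma4p2 (R : realType) (X : pseudoPMetricType R)
  (X_metric : hausdorff_space X) (X_compact : compact [set: X])
  (Y : set R) (Y_compact : compact Y) (Y_sub : Y `<=` `[-1, 1])
  (H : set (X -> R)) (ip : (X -> R) -> (X -> R) -> R)
  (H_RKHS : is_RKHS H ip) (H_cont : forall f, H f -> continuous f)
  (H_sup : forall f, H f -> supnorm f <= normH ip f)
  (L : R -> R -> R) (alpha cL : R)
  (alpha_bd : 1 <= alpha <= 2) (cL_gt0 : 0 < cL)
  (L_ge0 : forall y t, Y y -> 0 <= L y t)
  (L_cont : {within Y `*` [set: R], continuous (fun p : R * R => L p.1 p.2)})
  (L_convex : forall y, Y y -> forall (s t a : R), 0 <= a <= 1 ->
      L y (a * s + (1 - a) * t) <= a * L y s + (1 - a) * L y t)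
  (L_growth : forall t y : R, Y y -> L y t <= 1 + powR `|t| alpha)
  (L_lip : forall t : R, 0 <= t -> forall y, Y y -> forall s1 s2,
      `|s1| <= t -> `|s2| <= t ->
      `|L y s1 - L y s2| <= cL * powR t (alpha - 1) * `|s1 - s2|)
  (P : probability (BX X * R)%type R)
  (P_XY : P ([set: BX X] `*` Y) = 1%E)
  (fstar : BX X -> R) (fstar_meas : measurable_fun [set: BX X] fstar)
  (fstar_min : risk Y L P fstar = bayes_risk Y L P)
  (v c theta lam : R)
  (v_ge0 : 0 <= v) (c_ge1 : 1 <= c) (theta_bd : 0 <= theta <= 1)
  (lam_bd : 0 < lam < 1)
  (variance_bd : forall f, H f -> normH ip f <= (Num.sqrt lam)^-1 ->
     (Ex Y P (fun z => ((Lcomp L f z - Lcomp L fstar z) ^+ 2)%R)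
      <= (c * powR (supnorm f + 1) v)%:E *
         poweR (Ex Y P (fun z => (Lcomp L f z - Lcomp L fstar z)%R)) theta)%E) :
  forall g, Gset Y L P H ip lam g ->
    (Ex Y P (fun z => (g z ^+ 2)%R)
     <= (16 * c)%:E *
        poweR (poweR (Ex Y P g * (lam^-1)%:E) (2^-1)
               + poweR (approx_err Y L P H ip lam * (lam^-1)%:E) (2^-1) + 1) v *
        (poweR (Ex Y P g) theta
         + 2%:E * poweR (approx_err Y L P H ip lam) theta))%E.
Proof.
move=> g [f [Hf f_le] ->].
have mY := compact_measurable Y_compact.
have alpha_gt0 : 0 < alpha by case/andP: alpha_bd => /(lt_le_trans ltr01).
have lam_gt0 : 0 < lam by case/andP: lam_bd.
have intH := integrable_Lcomp_H P mY L_ge0 L_cont alpha_gt0 L_growth X_compact H_cont.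
have mH h (Hh : H h) := continuous_measurable_BX (H_cont h Hh).
have exc_ge0 := excess_risk_ge0 mY P_XY L_ge0 L_cont alpha_gt0 L_growth
  fstar_meas fstar_min X_compact H_cont.
have [Hf0 f0_le1] := fPlam_mem mY P_XY L_ge0 L_cont alpha_gt0 L_growth lam H_RKHS.
set f0 := fPlam Y L P H ip lam in Hf0 f0_le1 *.
have f0_le : normH ip f0 <= (Num.sqrt lam)^-1 by rewrite ler_inv_sqrt ?sqrtr_ge0.
have f_le1 : lam * normH ip f ^+ 2 <= 1 by rewrite -ler_inv_sqrt ?sqrtr_ge0.
have V := variance_bd f Hf f_le; have V0 := variance_bd f0 Hf0 f0_le.
rewrite !(Ex_Lcomp_sub mY P_XY L_ge0 L_cont alpha_gt0 L_growth fstar_meas fstar_min)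
  ?intH // in V V0.
rewrite (Ex_Ccomp_sub mY P_XY L_ge0 L_cont alpha_gt0 L_growth fstar ip lam
  X_compact H_cont Hf Hf0).
rewrite (approx_err_eq mY P_XY L_ge0 L_cont alpha_gt0 L_growth fstar_meas fstar_min lam
  X_compact H_RKHS H_cont).
apply: le_trans (Ex_sqr_Ccomp_sub_le mY P_XY L_cont fstar_meas ip lam (mH f Hf) (mH f0 Hf0)) _.
apply: le_trans (leeD (leeD (lexx _) (lee_wpmul2l (lee0n 4) V))
  (lee_wpmul2l (lee0n 4) V0)) _.
have sup_ge0 h : H h -> 0 <= supnorm h by move/H_cont; exact: supnorm_ge0.
rewrite -!EFinM -!EFinD lee_fin.
apply: Gset_moment_ineq; rewrite ?H_sup ?sup_ge0 ?exc_ge0 //.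
by rewrite -/f0; ring.
Qed.
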